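(* Let $\tilde{N}$, $N_1$, $N_2$ be real symmetric $n\times n$ matrices with spectral norm at most $1$, and suppose that $N_1$ is positive semidefinite and commutes with $N_2$. If $I-\tilde{N}\approx_{\epsilon}I-N_1$ (with $\epsilon\ge 0$), then \[ I-\tfrac{1}{2}(\tilde{N}N_2+N_2\tilde{N})\approx_{\epsilon}I-N_2N_1. \]
   Context: For real symmetric $X,Y$ and $\epsilon\ge0$, $X\approx_\epsilon Y$ means $(1-\epsilon)v^TYv\le v^TXv\le(1+\epsilon)v^TYv$ for all $v\in\mathbb{R}^n$. *)

From HB Require Import structures.
From mathcomp Require Import all_boot all_order all_algebra.
Set Implicit Arguments. Unset Strict Implicit. Unset Printing Implicit Defensive.
Import Order.TTheory GRing.Theory Num.Theory.
Local Open Scope ring_scope.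

Definition qform (R : rcfType) (n : nat) (X : 'M[R]_n) (v : 'cV[R]_n) : R :=
  (v^T *m X *m v) 0 0.

Definition is_symm (R : rcfType) (n : nat) (X : 'M[R]_n) : Prop := X^T = X.

(* spectral (operator 2-) norm at most 1:  ||X v||_2 <= ||v||_2 for all v,
   stated with squared Euclidean norms *)
Definition spec_norm_le1 (R : rcfType) (n : nat) (X : 'M[R]_n) : Prop :=
  forall v : 'cV[R]_n, ((X *m v)^T *m (X *m v)) 0 0 <= (v^T *m v) 0 0.

Definition psd (R : rcfType) (n : nat) (X : 'M[R]_n) : Prop :=
  forall v : 'cV[R]_n, 0 <= qform X v.

Definition approx_eps (R : rcfType) (n : nat) (eps : R) (X Y : 'M[R]_n) : Prop :=
  forall v : 'cV[R]_n,
    (1 - eps) * qform Y v <= qform X v /\ qform X v <= (1 + eps) * qform Y v.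

From HB Require Import structures.
From mathcomp Require Import all_boot all_order all_algebra.
From mathcomp Require Import ring lra.
Import Order.TTheory GRing.Theory Num.Theory.
Local Open Scope ring_scope.

(* Fix v and put y := N2 v.  For symmetric matrices the quadratic
   forms of the symmetrised product (Nt N2 + N2 Nt)/2 and of N2 N1 are the
   bilinear values <y, Nt v> and <y, N1 v>.  Polarisation writes
     4 (<v,v> - <y, M v>) = Q_M(v + y) - Q_M(v - y) + 4 (<v,v> - <v,y>),
   where Q_M(w) := w^T (I - M) w; so both sides of the claim are
   the same affine combination of the forms of I - Nt and I - N1 at the two
   vectors v + y and v - y.  The hypothesis compares these forms up to the
   factor 1 +- eps.  Since the vector v - y enters with a minus sign, the
   errors only stay within eps times the right-hand side because
   Q_{N1}(v - y) <= 2 (<v,v> - <v,y>), which follows from N1 >= 0 and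
   |N2 v| <= |v|. *)

Section QuadraticForms.
Context {R : rcfType} {n : nat}.
Implicit Types (u v y : 'cV[R]_n) (X Y : 'M[R]_n).

Definition dot u v : R := (u^T *m v) 0 0.

Lemma dotC u v : dot u v = dot v u.
Proof. by rewrite /dot -[v^T *m u]trmxK trmx_mul trmxK [in RHS]mxE. Qed.

Lemma dotDl u v y : dot (u + v) y = dot u y + dot v y.
Proof. by rewrite /dot raddfD /= mulmxDl mxE. Qed.

Lemma dotDr u v y : dot y (u + v) = dot y u + dot y v.
Proof. by rewrite /dot mulmxDr mxE. Qed.

Lemma dotNl u v : dot (- u) v = - dot u v.
Proof. by rewrite /dot raddfN /= mulNmx mxE. Qed.

Lemma dotNr u v : dot u (- v) = - dot u v.
Proof. by rewrite /dot mulmxN mxE. Qed.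

Lemma dotZr (a : R) u v : dot u (a *: v) = a * dot u v.
Proof. by rewrite /dot -scalemxAr mxE. Qed.

Lemma dot_sym X u v : X^T = X -> dot u (X *m v) = dot (X *m u) v.
Proof. by move=> symX; rewrite /dot trmx_mul symX mulmxA. Qed.

Lemma qformE X v : qform X v = dot v (X *m v).
Proof. by rewrite /qform /dot mulmxA. Qed.

Lemma qform1B X v : qform (1%:M - X) v = dot v v - qform X v.
Proof. by rewrite /qform /dot mulmxBr mulmxBl mulmx1 !mxE. Qed.

Lemma qform_mul_sym X Y v : Y^T = Y -> qform (Y *m X) v = dot (Y *m v) (X *m v).
Proof. by move=> symY; rewrite qformE -mulmxA dot_sym. Qed.

Lemma qform_symprod X Y v : X^T = X -> Y^T = Y ->
  qform (2^-1 *: (X *m Y + Y *m X)) v = dot (Y *m v) (X *m v).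
Proof.
move=> symX symY; rewrite qformE -scalemxAl mulmxDl dotZr dotDr -!mulmxA.
rewrite (dot_sym _ v (Y *m v) symX) (dot_sym _ v (X *m v) symY) (dotC (X *m v)).
by field; rewrite ?pnatr_eq0.
Qed.

Lemma polar_1B X v y : X^T = X ->
  4 * (dot v v - dot y (X *m v)) =
  qform (1%:M - X) (v + y) - qform (1%:M - X) (v - y) + 4 * (dot v v - dot v y).
Proof.
move=> symX; rewrite !qform1B !qformE !mulmxDr !mulmxN.
rewrite !dotDl !dotDr !dotNl !dotNr (dot_sym _ v y symX) (dotC (X *m v) y).
by rewrite (dotC y v); ring.
Qed.

Lemma qform_1B_psd_le X v y : psd X -> dot y y <= dot v v ->
  qform (1%:M - X) (v - y) <= 2 * (dot v v - dot v y).
Proof.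
move=> psdX yv; have Xge0 := psdX (v - y).
rewrite qform1B dotDl !dotDr !dotNl !dotNr opprK (dotC y v); lra.
Qed.

End QuadraticForms.

Lemma approx_affine {R : realFieldType} {eps p q p' q' d L L' : R} :
  0 <= eps ->
  (1 - eps) * p <= p' <= (1 + eps) * p ->
  (1 - eps) * q <= q' <= (1 + eps) * q ->
  q <= 2 * d -> 4 * L = p - q + 4 * d -> 4 * L' = p' - q' + 4 * d ->
  (1 - eps) * L <= L' /\ L' <= (1 + eps) * L.
Proof.
move=> eps_ge0 /andP[p_lo p_hi] /andP[q_lo q_hi] qd eL eL'.
have err : eps * (q - 2 * d) <= 0 by rewrite mulr_ge0_le0 // subr_le0.
have epsL : 4 * (eps * L) = eps * (p - q + 4 * d) by rewrite -eL; ring.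
split; lra.
Qed.

Theorem mainTheorem8 (R : rcfType) (n : nat) (eps : R) (Nt N1 N2 : 'M[R]_n) :
  is_symm Nt -> is_symm N1 -> is_symm N2 ->
  spec_norm_le1 Nt -> spec_norm_le1 N1 -> spec_norm_le1 N2 ->
  psd N1 -> N1 *m N2 = N2 *m N1 -> 0 <= eps ->
  approx_eps eps (1%:M - Nt) (1%:M - N1) ->
  approx_eps eps (1%:M - 2^-1 *: (Nt *m N2 + N2 *m Nt)) (1%:M - N2 *m N1).
Proof.
move=> symT sym1 sym2 _ _ contr2 psd1 _ eps_ge0 approx v.
set y := N2 *m v.
rewrite !qform1B qform_symprod // qform_mul_sym //.
have [p_lo p_hi] := approx (v + y); have [q_lo q_hi] := approx (v - y).
apply: (approx_affine eps_ge0 _ _ _ (polar_1B _ v y sym1) (polar_1B _ v y symT)).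
- by rewrite p_lo p_hi.
- by rewrite q_lo q_hi.
- exact: qform_1B_psd_le _ _ _ psd1 (contr2 v).
Qed.
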